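(* Let $\Lambda$ be a basic finite-dimensional $\tau$-tilting finite algebra over a field $K$. For $\mathcal{T}\in\mathrm{tors}\,\Lambda$, the following are equivalent: (1) there exists a projective module $P$ with $\mathcal{T}=\mathrm{Gen}(P)$; (2) there exists a set $\mathcal{A}$ of atoms of $\mathrm{tors}\,\Lambda$ such that $\mathcal{T}$ is the maximal element of $\mathrm{tors}\,\Lambda$ lying weakly above all atoms in $\mathcal{A}$ and not weakly above any atom outside $\mathcal{A}$; (3) there exists a set $\mathcal{S}$ of simple modules such that $\mathcal{T}$ is the largest torsion class containing all modules of $\mathcal{S}$ and containing no simple module outside $\mathcal{S}$. When these hold, $\mathcal{S}$ is the top of $P$ (equivalently, $P$ is the projective cover of $\mathcal{S}$); in particular, $P=0$ if and only if $\mathcal{A}=\emptyset=\mathcal{S}$.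
   Context: $\mathrm{mod}\,\Lambda$: finitely generated right $\Lambda$-modules; $\mathrm{tors}\,\Lambda$: finite lattice of torsion classes (subcategories closed under extensions and quotients) ordered by inclusion; its atoms are the torsion classes covering $0$. $\mathrm{Gen}(P)$: quotients of finite direct sums of copies of $P$. A set of modules is identified with their direct sum. *)

From HB Require Import structures.
From mathcomp Require Import all_boot all_order all_algebra all_field.
Set Implicit Arguments.
Unset Strict Implicit.
Unset Printing Implicit Defensive.
Import GRing.Theory.
Local Open Scope ring_scope.

Section RightModules.
Variables (K : fieldType) (L : falgType K).

(* A (finite-dimensional = finitely generated) right L-module: the space of
   row vectors K^rdim, with v . a := v *m ract a. *)
Record rmod := RMod { rdim : nat; ract : L -> 'M[K]_rdim }.

Definition is_rmod (M : rmod) : Prop :=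
  [/\ forall (k : K) (a b : L), ract M (k *: a + b) = k *: ract M a + ract M b,
      ract M 1 = 1%:M
    & forall a b : L, ract M (a * b) = ract M a *m ract M b].

Definition is_hom (M N : rmod) (f : 'M[K]_(rdim M, rdim N)) : Prop :=
  forall a : L, ract M a *m f = f *m ract N a.

Definition iso (M N : rmod) : Prop :=
  exists f : 'M[K]_(rdim M, rdim N), [/\ is_hom f, row_free f & row_full f].

Definition exact_seq (X Y Z : rmod) (f : 'M[K]_(rdim X, rdim Y))
  (g : 'M[K]_(rdim Y, rdim Z)) : Prop :=
  [/\ is_hom f, is_hom g, row_free f, row_full g & (f == kermx g)%MS].

(* torsion classes: full subcategories of mod L containing 0, closed under
   quotients (hence under isomorphisms) and extensions *)
Definition is_tors (T : rmod -> Prop) : Prop :=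
  [/\ forall M, is_rmod M -> rdim M = 0%N -> T M,
      forall (M N : rmod) (f : 'M[K]_(rdim M, rdim N)),
        is_rmod M -> is_rmod N -> T M -> is_hom f -> row_full f -> T N
    & forall (X Y Z : rmod) f g, is_rmod X -> is_rmod Y -> is_rmod Z ->
        T X -> T Z -> @exact_seq X Y Z f g -> T Y].

Definition subcat (T U : rmod -> Prop) : Prop :=
  forall M, is_rmod M -> T M -> U M.
Definition cat_eq (T U : rmod -> Prop) : Prop := subcat T U /\ subcat U T.

Definition zero_cat (T : rmod -> Prop) : Prop :=
  forall M, is_rmod M -> T M -> rdim M = 0%N.

Definition is_atom (A : rmod -> Prop) : Prop :=
  [/\ is_tors A, ~ zero_cat A
    & forall T, is_tors T -> subcat T A -> zero_cat T \/ subcat A T].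

Definition zero_mod : rmod := @RMod 0 (fun _ => 0).
Definition dsum (M N : rmod) : rmod :=
  @RMod (rdim M + rdim N) (fun a => block_mx (ract M a) 0 0 (ract N a)).
Definition dsum_list (s : seq rmod) : rmod := foldr dsum zero_mod s.
Definition pow_mod (P : rmod) (k : nat) : rmod := dsum_list (nseq k P).

Definition Gen (P : rmod) : rmod -> Prop :=
  fun N => exists k (f : 'M[K]_(rdim (pow_mod P k), rdim N)),
    is_hom f /\ row_full f.

Definition projective (P : rmod) : Prop :=
  forall (M N : rmod) (p : 'M[K]_(rdim M, rdim N)) (g : 'M[K]_(rdim P, rdim N)),
    is_rmod M -> is_rmod N -> is_hom p -> row_full p -> is_hom g ->
    exists h : 'M[K]_(rdim P, rdim M), is_hom h /\ h *m p = g.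

Definition simple (S : rmod) : Prop :=
  [/\ is_rmod S, (0 < rdim S)%N
    & forall m (U : 'M[K]_(m, rdim S)),
        (forall a : L, (U *m ract S a <= U)%MS) ->
        (U == (0 : 'M[K]_(rdim S)))%MS \/ (U == (1%:M : 'M[K]_(rdim S)))%MS].

Definition proj_cover (P M : rmod) : Prop :=
  projective P /\
  exists p : 'M[K]_(rdim P, rdim M),
    [/\ is_hom p, row_full p
      & forall (X : rmod) (g : 'M[K]_(rdim X, rdim P)),
          is_rmod X -> is_hom g -> row_full (g *m p) -> row_full g].

(* the regular right module L_L (matrix of right multiplication
   v |-> v * a in a K-basis of L) *)
Definition reg_mod : rmod :=
  @RMod (\dim {:L}) (fun a => passmx.mxof (vbasis {:L}) (vbasis {:L}) (amulr a)).

Definition indecomposable (M : rmod) : Prop :=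
  [/\ is_rmod M, (0 < rdim M)%N
    & forall N1 N2, is_rmod N1 -> is_rmod N2 -> iso M (dsum N1 N2) ->
        rdim N1 = 0%N \/ rdim N2 = 0%N].

Definition basic_alg : Prop :=
  exists s : seq rmod,
    [/\ forall i, (i < size s)%N -> indecomposable (nth zero_mod s i),
        forall i j, (i < size s)%N -> (j < size s)%N -> i <> j ->
          ~ iso (nth zero_mod s i) (nth zero_mod s j)
      & iso reg_mod (dsum_list s)].

(* tau-tilting finiteness, via the finiteness of tors L
   (Demonet-Iyama-Jasso) *)
Definition tau_tilting_finite : Prop :=
  exists (n : nat) (F : nat -> rmod -> Prop),
    forall T, is_tors T -> exists i, (i < n)%N /\ cat_eq T (F i).

Definition nullc : rmod -> Prop := fun _ => False.

Definition atom_cond (A : seq (rmod -> Prop)) (U : rmod -> Prop) : Prop :=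
  [/\ is_tors U,
      forall i, (i < size A)%N -> subcat (nth nullc A i) U
    & forall B, is_atom B -> subcat B U ->
        exists i, (i < size A)%N /\ cat_eq B (nth nullc A i)].

Definition cond2 (A : seq (rmod -> Prop)) (T : rmod -> Prop) : Prop :=
  [/\ forall i, (i < size A)%N -> is_atom (nth nullc A i),
      atom_cond A T
    & forall U, atom_cond A U -> subcat U T].

Definition simple_cond (S : seq rmod) (U : rmod -> Prop) : Prop :=
  [/\ is_tors U,
      forall i, (i < size S)%N -> U (nth zero_mod S i)
    & forall M, simple M -> U M ->
        exists i, (i < size S)%N /\ iso M (nth zero_mod S i)].

Definition cond3 (S : seq rmod) (T : rmod -> Prop) : Prop :=
  [/\ forall i, (i < size S)%N -> simple (nth zero_mod S i),
      forall i j, (i < size S)%N -> (j < size S)%N -> i <> j ->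
        ~ iso (nth zero_mod S i) (nth zero_mod S j),
      simple_cond S T
    & forall U, simple_cond S U -> subcat U T].

End RightModules.

(* Torsion classes are controlled by their simple modules.  The atoms of tors L
   are exactly the torsion classes T(S) generated by one simple module S, and
   T(S) lies below a torsion class U iff S belongs to U; so sets of atoms and
   sets of simple modules determine each other, and conditions (2) and (3)
   coincide.  The simple modules of a torsion class have a finite set of
   representatives because tors L, hence the set of simple modules up to
   isomorphism, is finite.  For P projective, Gen P contains every torsion
   class all of whose simple modules are quotients of P: a map P^k -> M of
   maximal rank is onto, for otherwise a simple quotient of M killing its
   image would lift back through P.  Hence the largest torsion class whose
   simple modules are those of a given set is Gen of the projective cover of
   their direct sum.  Such a cover exists: a projective module of minimal
   dimension mapping onto M does so essentially, by Fitting's lemma. *)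

From mathcomp Require Import all_boot all_order all_algebra all_field boolp.
Set Implicit Arguments. Unset Strict Implicit. Unset Printing Implicit Defensive.
Import GRing.Theory.
Local Open Scope ring_scope.

Lemma classic_ex_minn (P : nat -> Prop) :
  (exists n, P n) -> exists2 n, P n & forall m, P m -> (n <= m)%N.
Proof.
move=> [n Pn]; have exP : exists n, `[< P n >] by exists n; apply/asboolP.
by case: (ex_minnP exP) => m /asboolP Pm minm; exists m => // k /asboolP /minm.
Qed.

Lemma classic_ex_maxn (P : nat -> Prop) b :
  (exists n, P n) -> (forall n, P n -> (n <= b)%N) ->
  exists2 n, P n & forall m, P m -> (m <= n)%N.
Proof.
move=> [n Pn] leb; have exP : exists n, `[< P n >] by exists n; apply/asboolP.
have ubP m : `[< P m >] -> (m <= b)%N by move/asboolP/leb.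
by case: (ex_maxnP exP ubP) => m /asboolP Pm maxm; exists m => // k /asboolP /maxm.
Qed.

Section MatrixFacts.
Variable K : fieldType.

Lemma row_full_mulmx m n p (A : 'M[K]_(m, n)) (B : 'M_(n, p)) :
  row_full A -> row_full B -> row_full (A *m B).
Proof. by move=> fA; rewrite /row_full (eqmxMfull _ fA). Qed.

Lemma row_full_neq0 m n (A : 'M[K]_(m, n)) : row_full A -> (0 < n)%N -> A != 0.
Proof. by move=> fA; apply: contraTneq => A0; rewrite -(eqP fA) A0 mxrank0. Qed.

Lemma mulmxKpV_ker m n p (g : 'M[K]_(m, n)) (h : 'M_(m, p)) :
  row_full g -> kermx g *m h = 0 -> g *m (pinvmx g *m h) = h.
Proof.
move=> fg kh; apply/eqP; rewrite mulmxA -subr_eq0 -{2}[h]mul1mx -mulmxBl.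
have /submxP[D ->] : (g *m pinvmx g - 1%:M <= kermx g)%MS.
  by apply/sub_kermxP; rewrite mulmxBl -mulmxA mulVpmx // mulmx1 mul1mx subrr.
by rewrite -mulmxA kh mulmx0.
Qed.

Lemma mx_rV_ext m n (A B : 'M[K]_(m, n)) : (forall v : 'rV_m, v *m A = v *m B) -> A = B.
Proof. by move=> eqAB; apply/row_matrixP => i; rewrite !rowE eqAB. Qed.

Lemma mul_rV_linear m n (phi : 'rV[K]_m -> 'rV[K]_n) :
  (forall k x y, phi (k *: x + y) = k *: phi x + phi y) ->
  forall v, v *m (\matrix_i phi (delta_mx 0 i)) = phi v.
Proof.
move=> lin v; have phi0 : phi 0 = 0.
  by have := lin (-1) 0 0; rewrite scaler0 addr0 scaleN1r addNr.
rewrite mulmx_sum_row {2}(row_sum_delta v).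
elim/big_rec2: _ => [|i y1 y2 _ ->]; first by rewrite phi0.
by rewrite rowK lin.
Qed.

Lemma fitting_rank_pow n (E : 'M[K]_n) :
  exists k, \rank (E ^+ k.+1 *m E ^+ k.+1) = \rank (E ^+ k.+1).
Proof.
have [r [k <-] minr] : exists2 r, (exists k, \rank (E ^+ k.+1) = r) &
    forall r', (exists k, \rank (E ^+ k.+1) = r') -> (r <= r')%N.
  by apply: classic_ex_minn; exists (\rank (E ^+ 1)), 0%N.
exists k; apply/eqP; rewrite eqn_leq mxrankM_maxl minr //.
by exists (k.+1 + k)%N; rewrite mulmxE -exprD addnS.
Qed.

Lemma expmx_fix n p (E : 'M[K]_n) (f : 'M_(n, p)) k : E *m f = f -> E ^+ k *m f = f.
Proof. by move=> Ef; elim: k => [|k IHk]; rewrite ?expr0 ?mul1mx // exprSr -mulmxE -mulmxA Ef. Qed.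

End MatrixFacts.

Section RightModules.
Variables (K : fieldType) (L : falgType K).
Local Notation rmod := (rmod L).

(** * Submodules, quotients and simple modules *)

Definition submod (M : rmod) m (V : 'M[K]_(m, rdim M)) := forall a, stablemx V (ract M a).

Lemma hom_mulmx (M N Q : rmod) f g :
  @is_hom _ _ M N f -> @is_hom _ _ N Q g -> @is_hom _ _ M Q (f *m g).
Proof. by move=> hf hg a; rewrite mulmxA hf -mulmxA hg mulmxA. Qed.

Lemma hom1 (M : rmod) : @is_hom _ _ M M 1%:M.
Proof. by move=> a; rewrite mulmx1 mul1mx. Qed.

Lemma hom0 (M N : rmod) : @is_hom _ _ M N 0.
Proof. by move=> a; rewrite mulmx0 mul0mx. Qed.

Lemma hom_submod (M N : rmod) f : @is_hom _ _ M N f -> submod f.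
Proof. by move=> hf a; rewrite -hf submxMl. Qed.

Lemma ker_submod (M N : rmod) f : @is_hom _ _ M N f -> submod (kermx f).
Proof. by move=> hf a; apply/sub_kermxP; rewrite -mulmxA hf mulmxA mulmx_ker mul0mx. Qed.

Lemma is_rmod_epi (M N : rmod) q :
  is_rmod M -> @is_hom _ _ M N q -> row_full q -> is_rmod N.
Proof.
move=> [lin one mul] hq fq; split => [k a b||a b]; apply: (row_full_inj fq).
- by rewrite -hq lin mulmxDl -scalemxAl !hq mulmxDr -scalemxAr.
- by rewrite -hq one mul1mx mulmx1.
- by rewrite -hq mul -mulmxA hq !mulmxA hq.
Qed.

Lemma is_rmod_mono (M N : rmod) f :
  is_rmod N -> @is_hom _ _ M N f -> row_free f -> is_rmod M.
Proof.
move=> [lin one mul] hf ff; split => [k a b||a b]; apply: (row_free_inj ff) => /=.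
- by rewrite hf lin mulmxDr -scalemxAr -!hf mulmxDl -scalemxAl.
- by rewrite hf one mul1mx mulmx1.
- by rewrite hf mul mulmxA -hf -!mulmxA hf.
Qed.

Definition sub_rmod (M : rmod) m (V : 'M_(m, rdim M)) : rmod :=
  @RMod _ L (\rank V) (fun a => row_base V *m ract M a *m pinvmx (row_base V)).

Lemma hom_sub_rmod (M : rmod) m (V : 'M_(m, rdim M)) :
  submod V -> @is_hom _ _ (sub_rmod V) M (row_base V).
Proof. by move=> sV a /=; rewrite mulmxKpV // stablemx_row_base. Qed.

Lemma is_rmod_sub (M : rmod) m (V : 'M_(m, rdim M)) :
  is_rmod M -> submod V -> is_rmod (sub_rmod V).
Proof. by move=> rM sV; apply: is_rmod_mono rM (hom_sub_rmod sV) (row_base_free V). Qed.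

Definition quot_map (M : rmod) m (V : 'M[K]_(m, rdim M)) := col_base (cokermx V).

Definition quot_rmod (M : rmod) m (V : 'M[K]_(m, rdim M)) : rmod :=
  @RMod _ L (\rank (cokermx V)) (fun a => pinvmx (quot_map V) *m ract M a *m quot_map V).

Lemma quot_map_full (M : rmod) m (V : 'M_(m, rdim M)) : row_full (quot_map V).
Proof. exact: col_base_full. Qed.

Lemma quot_map_eq0 (M : rmod) m (V : 'M_(m, rdim M)) p (A : 'M_(p, rdim M)) :
  (A *m quot_map V == 0) = (A <= V)%MS.
Proof.
rewrite submxE -(mulmx_free_eq0 _ (row_base_free (cokermx V))).
by rewrite -mulmxA mulmx_base.
Qed.

Lemma hom_quot_map (M : rmod) m (V : 'M_(m, rdim M)) :
  submod V -> @is_hom _ _ M (quot_rmod V) (quot_map V).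
Proof.
move=> sV a /=; rewrite -mulmxA mulmxKpV_ker ?quot_map_full //; apply/eqP.
have kerV : (kermx (quot_map V) <= V)%MS by rewrite -quot_map_eq0 mulmx_ker.
by rewrite mulmxA quot_map_eq0 (submx_trans (submxMr _ kerV)).
Qed.

Lemma is_rmod_quot (M : rmod) m (V : 'M_(m, rdim M)) :
  is_rmod M -> submod V -> is_rmod (quot_rmod V).
Proof. by move=> rM sV; apply: is_rmod_epi rM (hom_quot_map sV) (quot_map_full V). Qed.

Lemma hom_factor (Y Z N : rmod) (g : 'M_(rdim Y, rdim Z)) (h : 'M_(rdim Y, rdim N)) :
  is_hom g -> row_full g -> is_hom h -> kermx g *m h = 0 ->
  @is_hom _ _ Z N (pinvmx g *m h).
Proof.
move=> hg fg hh kh a; apply: (row_full_inj fg).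
by rewrite mulmxA -hg -mulmxA mulmxKpV_ker // hh [RHS]mulmxA mulmxKpV_ker.
Qed.

Lemma iso_sym (M N : rmod) : iso M N -> iso N M.
Proof.
case=> f [hf ffr ffu]; have kf : kermx f *m 1%:M = 0 by apply/eqP; rewrite mulmx1 kermx_eq0.
have := hom_factor hf ffu (hom1 M) kf; rewrite mulmx1 => hf'.
by exists (pinvmx f); split; [|exact: pinvmx_free|exact: pinvmx_full].
Qed.

Lemma tors_iso (T : rmod -> Prop) (M N : rmod) :
  is_tors T -> is_rmod M -> is_rmod N -> iso M N -> T M -> T N.
Proof. by case=> _ quotT _ rM rN [f [hf _ ff]] TM; apply: (quotT M N f). Qed.

Lemma simple_rmod (S : rmod) : simple S -> is_rmod S.
Proof. by case. Qed.

Lemma hom_simple_full (M S : rmod) (f : 'M_(rdim M, rdim S)) :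
  simple S -> is_hom f -> f != 0 -> row_full f.
Proof.
case=> _ _ minS hf f0; case: (minS _ f (hom_submod hf)) => /andP[fS Sf].
  by rewrite -submx0 fS in f0.
by rewrite -sub1mx.
Qed.

Lemma simple_hom_free (S N : rmod) (f : 'M_(rdim S, rdim N)) :
  simple S -> is_hom f -> f != 0 -> row_free f.
Proof.
case=> _ _ minS hf f0; rewrite -kermx_eq0.
case: (minS _ _ (ker_submod hf)) => /andP[kS Sk]; first by rewrite -submx0.
by move: f0; rewrite -[f]mul1mx (sub_kermxP Sk) eqxx.
Qed.

Lemma schur_iso (S1 S2 : rmod) (f : 'M_(rdim S1, rdim S2)) :
  simple S1 -> simple S2 -> is_hom f -> f != 0 -> iso S1 S2.
Proof.
by move=> sS1 sS2 hf f0; exists f; split; [|apply: simple_hom_free|apply: hom_simple_full].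
Qed.

Definition lperp (S : rmod) : rmod -> Prop :=
  fun M => forall f : 'M_(rdim M, rdim S), @is_hom _ _ M S f -> f = 0.

Lemma is_tors_lperp (S : rmod) : is_tors (lperp S).
Proof.
split.
- move=> M _ M0 f _; apply/eqP; rewrite -mxrank_eq0 -leqn0 -M0; exact: rank_leq_row.
- move=> M N f _ _ perpM hf ff h hh; apply: (row_full_inj ff).
  by rewrite mulmx0 (perpM (f *m h)) //; apply: hom_mulmx hf hh.
- move=> X Y Z f g _ _ _ perpX perpZ [hf hg _ fg /andP[_ kerf]] h hh.
  have fh0 : f *m h = 0 by apply: perpX; apply: hom_mulmx hf hh.
  have kh : kermx g *m h = 0 by case/submxP: kerf => D ->; rewrite -mulmxA fh0 mulmx0.
  by rewrite -(mulmxKpV_ker fg kh) (perpZ _ (hom_factor hg fg hh kh)) mulmx0.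
Qed.

Lemma simple_lperp (S1 S2 : rmod) : simple S1 -> simple S2 -> ~ iso S1 S2 -> lperp S2 S1.
Proof.
move=> sS1 sS2 nS f hf; have [//|f0] := eqVneq f 0.
by case: nS; apply: schur_iso hf f0.
Qed.

Lemma simple_not_lperp (S : rmod) : simple S -> ~ lperp S S.
Proof.
case=> _ S_gt0 _ perpS; have /eqP := perpS _ (hom1 S).
by apply/negP/row_full_neq0; rewrite // /row_full mxrank1.
Qed.

Lemma max_proper_submod (M : rmod) m (V : 'M_(m, rdim M)) :
  submod V -> ~~ row_full V ->
  exists W : 'M_(rdim M), [/\ submod W, (V <= W)%MS, ~~ row_full W &
    forall m' (W' : 'M_(m', rdim M)),
      submod W' -> (W <= W')%MS -> ~~ row_full W' -> (W' <= W)%MS].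
Proof.
pose proper k := exists W : 'M_(rdim M),
  [/\ submod W, (V <= W)%MS, ~~ row_full W & \rank W = k].
have genP m' (W : 'M_(m', rdim M)) :
    submod W -> (V <= W)%MS -> ~~ row_full W -> proper (\rank W).
  move=> sW VW nW; exists <<W>>%MS; rewrite /row_full !genmxE; split => //.
  by move=> a; rewrite (eqmx_stable _ (genmxE W)).
move=> sV nV; have [k [W [sW VW nW <-]] maxW] :
    exists2 k, proper k & forall k', proper k' -> (k' <= k)%N.
  apply: classic_ex_maxn (ex_intro _ _ (genP _ _ sV (submx_refl V) nV)) _.
  by move=> k [W [_ _ _ <-]]; exact: rank_leq_col.
exists W; split => // m' W' sW' WW' nW'.
have := maxW _ (genP _ _ sW' (submx_trans VW WW') nW').
by rewrite -(mxrank_leqif_sup WW').2 eqn_leq (mxrankS WW').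
Qed.

Lemma simple_quot_max (M : rmod) (W : 'M_(rdim M)) :
  is_rmod M -> submod W -> ~~ row_full W ->
  (forall m (W' : 'M_(m, rdim M)),
     submod W' -> (W <= W')%MS -> ~~ row_full W' -> (W' <= W)%MS) ->
  simple (quot_rmod W).
Proof.
move=> rM sW nW maxW; set q := quot_map W.
have hq : @is_hom _ _ M (quot_rmod W) q by exact: hom_quot_map.
have qK : pinvmx q *m q = 1%:M by apply/mulVpmx/quot_map_full.
split; first exact: is_rmod_quot.
  by rewrite /= mxrank_coker subn_gt0 ltn_neqAle rank_leq_col andbT.
move=> m U sU; set c := q *m quot_map U.
have hc : @is_hom _ _ M (quot_rmod U) c := hom_mulmx hq (hom_quot_map sU).
have Wq : W *m q = 0 by apply/eqP; rewrite quot_map_eq0.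
have Wc : (W <= kermx c)%MS by apply/sub_kermxP; rewrite mulmxA Wq mul0mx.
case: (boolP (row_full (kermx c))) => [fk|nk].
  have c0 : c = 0 by rewrite -[c]mul1mx; apply/sub_kermxP; rewrite sub1mx.
  have qU0 : quot_map U = 0 by apply: (row_full_inj (quot_map_full W)); rewrite mulmx0.
  by right; rewrite submx1 -(quot_map_eq0 U) mul1mx qU0 eqxx.
have kW := maxW _ _ (ker_submod hc) Wc nk.
have UqU : U *m quot_map U = 0 by apply/eqP; rewrite quot_map_eq0.
have : (U *m pinvmx q <= W)%MS.
  by apply: submx_trans kW; apply/sub_kermxP; rewrite mulmxA -(mulmxA U) qK mulmx1 UqU.
by rewrite -(quot_map_eq0 W) -mulmxA qK mulmx1 => /eqP->; left; rewrite !sub0mx.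
Qed.

Lemma simple_quot (M : rmod) m (V : 'M_(m, rdim M)) :
  is_rmod M -> submod V -> ~~ row_full V ->
  exists Q (q : 'M_(rdim M, rdim Q)), [/\ simple Q, is_hom q, row_full q & V *m q = 0].
Proof.
move=> rM sV nV; have [W [sW VW nW maxW]] := max_proper_submod sV nV.
exists (quot_rmod W), (quot_map W); split.
- exact: simple_quot_max.
- exact: hom_quot_map.
- exact: quot_map_full.
- by apply/eqP; rewrite quot_map_eq0.
Qed.

(** * Direct sums and the subcategories Gen P *)

Lemma hom_col_mx (M1 M2 N : rmod) (f : 'M_(rdim M1, rdim N)) (g : 'M_(rdim M2, rdim N)) :
  @is_hom _ _ (dsum M1 M2) N (col_mx f g) <-> is_hom f /\ is_hom g.
Proof.
rewrite /is_hom /=; under [X in X <-> _]eq_forall => a do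
  rewrite mul_block_col mul_col_mx !mul0mx addr0 add0r.
split => [h|[hf hg] a]; last by rewrite hf hg.
by split => a; have /eq_col_mx[] := h a.
Qed.

Lemma is_rmod_dsum (M1 M2 : rmod) : is_rmod M1 -> is_rmod M2 -> is_rmod (dsum M1 M2).
Proof.
move=> [l1 o1 m1] [l2 o2 m2]; split => /= [k a b||a b].
- by rewrite l1 l2 scale_block_mx add_block_mx !scaler0 !addr0.
- by rewrite o1 o2 -scalar_mx_block.
- by rewrite mulmx_block m1 m2 !mulmx0 !mul0mx !addr0 add0r.
Qed.

Lemma is_rmod_zero : is_rmod (zero_mod L).
Proof. by split => *; apply/matrixP => -[]. Qed.

Lemma is_rmod_dsum_list (s : seq rmod) :
  (forall i, (i < size s)%N -> is_rmod (nth (zero_mod L) s i)) -> is_rmod (dsum_list s).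
Proof.
elim: s => [|X s IHs] rs; first exact: is_rmod_zero.
by apply: is_rmod_dsum; [exact: (rs 0%N) | apply: IHs => i; exact: (rs i.+1)].
Qed.

Lemma is_rmod_pow (P : rmod) k : is_rmod P -> is_rmod (pow_mod P k).
Proof. by move=> rP; apply: is_rmod_dsum_list => i; rewrite size_nseq nth_nseq => ->. Qed.

Lemma dsum_list_epi (s : seq rmod) i : (i < size s)%N ->
  exists pi : 'M_(rdim (dsum_list s), rdim (nth (zero_mod L) s i)), is_hom pi /\ row_full pi.
Proof.
elim: s i => [|X s IHs] // [|i] lti /=.
  exists (col_mx 1%:M 0); split; first by apply/hom_col_mx; split; [exact: hom1|exact: hom0].
  by rewrite -sub1mx -addsmxE addsmxSl.
have [pi [hpi fpi]] := IHs i lti.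
exists (col_mx 0 pi); split; first by apply/hom_col_mx; split; [exact: hom0|].
by rewrite -sub1mx -addsmxE (submx_trans _ (addsmxSr _ _)) ?sub1mx.
Qed.

Lemma dsum_list_hom_neq0 (s : seq rmod) (N : rmod) (h : 'M_(rdim (dsum_list s), rdim N)) :
  is_hom h -> h != 0 -> exists2 i, (i < size s)%N &
    exists g : 'M_(rdim (nth (zero_mod L) s i), rdim N), is_hom g /\ g != 0.
Proof.
elim: s h => [|X s IHs] h hh; first by rewrite (flatmx0 h) eqxx.
rewrite -[h]vsubmxK in hh *; have [h1 h2] := (hom_col_mx _ _).1 hh.
have [u0|u0] := eqVneq (usubmx h) 0; last by exists 0%N => //; exists (usubmx h).
rewrite u0 => h0; have [|i lti gi] := IHs _ h2; last by exists i.+1.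
by apply: contraNneq h0 => ->; rewrite col_mx0.
Qed.

Lemma projective_dsum (P1 P2 : rmod) :
  projective P1 -> projective P2 -> projective (dsum P1 P2).
Proof.
move=> pP1 pP2 M N p g rM rN hp fp; rewrite -[g]vsubmxK => /hom_col_mx[hg1 hg2].
have [h1 [hh1 <-]] := pP1 M N p _ rM rN hp fp hg1.
have [h2 [hh2 <-]] := pP2 M N p _ rM rN hp fp hg2.
by exists (col_mx h1 h2); rewrite mul_col_mx; split => //; apply/hom_col_mx.
Qed.

Lemma projective_zero : projective (zero_mod L).
Proof. by move=> *; exists 0; split; [exact: hom0 | apply/matrixP => -[]]. Qed.

Lemma projective_pow (P : rmod) k : projective P -> projective (pow_mod P k).
Proof.
by move=> pP; elim: k => [|k IHk]; [exact: projective_zero | exact: projective_dsum].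
Qed.

Lemma Gen_epi (P N : rmod) (h : 'M_(rdim P, rdim N)) : is_hom h -> row_full h -> Gen P N.
Proof.
move=> hh fh; exists 1%N, (col_mx h 0); split; first by apply/hom_col_mx; split; last exact: hom0.
by rewrite -sub1mx -addsmxE (submx_trans _ (addsmxSl _ _)) ?sub1mx.
Qed.

Lemma Gen_self (P : rmod) : Gen P P.
Proof. by apply: Gen_epi (hom1 P) _; rewrite /row_full mxrank1. Qed.

Lemma Gen_simpleP (P S : rmod) :
  simple S -> Gen P S <-> exists h : 'M_(rdim P, rdim S), is_hom h /\ h != 0.
Proof.
move=> sS; split => [[k [F [hF fF]]]|[h [hh h0]]]; last first.
  exact: Gen_epi hh (hom_simple_full sS hh h0).
have [|i] := dsum_list_hom_neq0 hF; first by apply: row_full_neq0 fF _; case: sS.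
by rewrite size_nseq => lti; rewrite nth_nseq lti.
Qed.

Lemma hom_pow_mod_cat (P N : rmod) j k (A : 'M_(rdim (pow_mod P j), rdim N))
    (B : 'M_(rdim (pow_mod P k), rdim N)) : is_hom A -> is_hom B ->
  exists C : 'M_(rdim (pow_mod P (j + k)), rdim N), [/\ is_hom C, (A <= C)%MS & (B <= C)%MS].
Proof.
elim: j A => [|j IHj] A hA hB; first by exists B; rewrite (flatmx0 A) sub0mx.
move: A hA; rewrite [pow_mod P j.+1]/= -/(pow_mod P j) => A.
rewrite -[A]vsubmxK => /hom_col_mx[hA1 hA2].
have [C [hC AC BC]] := IHj _ hA2 hB.
exists (col_mx (usubmx A) C); rewrite col_mx_sub -!addsmxE addsmxSl; split.
- exact/hom_col_mx.
- exact: submx_trans AC (addsmxSr _ _).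
- exact: submx_trans BC (addsmxSr _ _).
Qed.

Lemma is_tors_Gen (P : rmod) : projective P -> is_tors (Gen P).
Proof.
move=> pP; split.
- by move=> M _ M0; apply: Gen_epi (hom0 P M) _; rewrite /row_full mxrank0 M0.
- move=> M N f _ _ [k [F [hF fF]]] hf ff.
  by exists k, (F *m f); split; [exact: hom_mulmx | exact: row_full_mulmx].
move=> X Y Z f g _ rY rZ [j [FX [hFX fFX]]] [k [FZ [hFZ fFZ]]] [hf hg _ fg /andP[_ kerf]].
have pPk : projective (pow_mod P k) by exact: projective_pow.
have [H [hH HgFZ]] := pPk Y Z g FZ rY rZ hg fg hFZ.
have [C [hC FXfC HC]] := hom_pow_mod_cat (hom_mulmx hFX hf) hH.
exists (j + k)%N, C; split => //; rewrite -sub1mx.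
have /submxP[D gDHg] : (g <= H *m g)%MS by rewrite HgFZ submx_full.
have DHC : (D *m H <= C)%MS by apply: submx_trans (submxMl _ _) HC.
rewrite -(subrK (D *m H) 1%:M) addmx_sub // (submx_trans _ FXfC) //.
apply: submx_trans (_ : f <= _)%MS; last by rewrite -{1}[f]mul1mx submxMr ?sub1mx.
apply: submx_trans kerf; apply/sub_kermxP.
by rewrite mulmxBl mul1mx -mulmxA -gDHg subrr.
Qed.

Lemma Gen_max (P : rmod) (U : rmod -> Prop) : projective P -> is_tors U ->
  (forall S, simple S -> U S -> exists h : 'M_(rdim P, rdim S), is_hom h /\ h != 0) ->
  subcat U (Gen P).
Proof.
move=> pP tU homP M rM UM.
pose image r := exists k (F : 'M_(rdim (pow_mod P k), rdim M)), is_hom F /\ \rank F = r.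
have [r [k [F [hF <-]]] maxF] : exists2 r, image r & forall r', image r' -> (r' <= r)%N.
  apply: classic_ex_maxn; first by exists 0%N, 0%N, 0; rewrite mxrank0; split; first exact: hom0.
  by move=> r [k [F [_ <-]]]; exact: rank_leq_col.
have [fF|nF] := boolP (row_full F); first by exists k, F.
have [Q [q [sQ hq fq Fq]]] := simple_quot rM (hom_submod hF) nF.
have rQ := simple_rmod sQ.
have UQ : U Q by case: tU => _ quotU _; exact: (quotU M Q q rM rQ UM hq fq).
have [s [hs s0]] := homP Q sQ UQ.
have [h [hh hqs]] := pP M Q q s rM rQ hq fq hs.
have FhF : (F <= col_mx h F)%MS by rewrite -addsmxE addsmxSr.
have : (col_mx h F <= F)%MS.
  rewrite -(mxrank_leqif_sup FhF).2 eqn_leq (mxrankS FhF) maxF //.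
  by exists k.+1, (col_mx h F); split => //; apply/hom_col_mx.
rewrite col_mx_sub => /andP[/submxP[D hD] _].
by move: s0; rewrite -hqs hD -mulmxA Fq mulmx0 eqxx.
Qed.

(** * The regular module and projective covers *)

Section RegularModule.

Local Notation e := (vbasis {:L}).
Local Notation rVof := (passmx.rVof e).
Local Notation vecof := (passmx.vecof e).

Lemma reg_modE (a : L) u : u *m ract (reg_mod L) a = rVof (vecof u * a).
Proof. by rewrite /= passmx.mul_mxof lfunE. Qed.

Lemma is_rmod_reg : is_rmod (reg_mod L).
Proof.
split => [k a b||a b] /=.
- by rewrite linearP passmx.mxof_linear.
- by rewrite (amulr_is_monoid_morphism _).1 passmx.mxof1 // (basis_free (vbasisP _)).
- by rewrite (amulr_is_monoid_morphism _).2 (@passmx.mxof_comp _ _ _ _ e e e (vbasisP _)).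
Qed.

Definition reg_hom (M : rmod) (m : 'rV[K]_(rdim M)) : 'M[K]_(\dim {:L}, rdim M) :=
  \matrix_i (m *m ract M (vecof (delta_mx 0 i))).

Lemma reg_homE (M : rmod) (m : 'rV_(rdim M)) v :
  is_rmod M -> v *m reg_hom m = m *m ract M (vecof v).
Proof.
case=> lin _ _; apply: (mul_rV_linear (phi := fun v => m *m ract M (vecof v))) => k x y.
by rewrite passmx.vecof_linear lin mulmxDr -scalemxAr.
Qed.

Lemma hom_reg_hom (M : rmod) (m : 'rV_(rdim M)) :
  is_rmod M -> @is_hom _ _ (reg_mod L) M (reg_hom m).
Proof.
move=> rM a; apply: mx_rV_ext => v; rewrite mulmxA reg_modE reg_homE // mulmxA reg_homE //.
by rewrite (passmx.rVofK (vbasisP _)); case: rM => _ _ ->; rewrite mulmxA.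
Qed.

Lemma reg_hom1 (M : rmod) (m : 'rV_(rdim M)) : is_rmod M -> rVof 1 *m reg_hom m = m.
Proof.
by move=> rM; rewrite reg_homE // (passmx.rVofK (vbasisP _)); case: rM => _ -> _; rewrite mulmx1.
Qed.

Lemma projective_reg : projective (reg_mod L).
Proof.
move=> M N p g rM rN hp fp hg; pose m := rVof 1 *m g *m pinvmx p.
exists (reg_hom m); split; first exact: hom_reg_hom.
apply: mx_rV_ext => v; rewrite mulmxA reg_homE // -mulmxA hp mulmxA mulmxKpV ?submx_full //.
by rewrite -mulmxA -hg mulmxA reg_modE (passmx.rVofK (vbasisP _)) mul1r (passmx.vecofK (vbasisP _)).
Qed.

Lemma Gen_reg (M : rmod) : is_rmod M -> Gen (reg_mod L) M.
Proof.
have tM : is_tors (fun _ : rmod => True) by [].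
move=> rM; apply: Gen_max projective_reg tM _ M rM I => S [rS S_gt0 _] _.
pose i : 'I_(rdim S) := Ordinal S_gt0.
exists (reg_hom (delta_mx 0 i)); split; first exact: hom_reg_hom.
apply: contra_neq (oner_neq0 K) => h0.
by have /matrixP/(_ 0 i) := reg_hom1 (delta_mx 0 i) rS; rewrite h0 mulmx0 !mxE eqxx.
Qed.

End RegularModule.

Lemma hom_exp (P : rmod) (E : 'M_(rdim P)) k : is_hom E -> is_hom (E ^+ k).
Proof.
by move=> hE; elim: k => [|k IHk]; rewrite ?expr0 ?exprSr; [exact: hom1 | exact: hom_mulmx].
Qed.

Lemma projective_retract (P Q : rmod) (i : 'M_(rdim Q, rdim P)) (r : 'M_(rdim P, rdim Q)) :
  is_hom i -> is_hom r -> i *m r = 1%:M -> projective P -> projective Q.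
Proof.
move=> hi hr ir pP M N p g rM rN hp fp hg.
have [h [hh hp_rg]] := pP M N p (r *m g) rM rN hp fp (hom_mulmx hr hg).
by exists (i *m h); split; [exact: hom_mulmx | rewrite -mulmxA hp_rg mulmxA ir mul1mx].
Qed.

(* Fitting: when [F] and [F^2] have the same rank, [P] is the direct sum of the image and
   the kernel of [F]. *)
Lemma image_retract (P : rmod) (F : 'M_(rdim P)) :
  is_hom F -> \rank (F *m F) = \rank F ->
  exists r : 'M_(rdim P, \rank F), @is_hom _ _ P (sub_rmod F) r /\ row_base F *m r = 1%:M.
Proof.
move=> hF rkFF; set B := row_base F.
have BF_FF : (B *m F :=: F *m F)%MS := eqmxMr F (eq_row_base F).
have freeBF : row_free (B *m F) by rewrite /row_free BF_FF rkFF.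
have F_BF : (F <= B *m F)%MS.
  by rewrite BF_FF -(mxrank_leqif_sup (submxMl F F)).2 rkFF.
exists (F *m pinvmx (B *m F)); split; last by rewrite mulmxA mulmxVp.
move=> a; apply: (row_free_inj freeBF) => /=; set X := F *m pinvmx (B *m F).
have BaB : B *m ract P a *m pinvmx B *m B = B *m ract P a.
  by rewrite mulmxKpV // stablemx_row_base hom_submod.
have XBF : X *m (B *m F) = F by rewrite mulmxKpV.
rewrite -mulmxA XBF hF (_ : X *m _ *m _ = X *m (B *m ract P a *m pinvmx B *m B) *m F).
  by rewrite BaB -mulmxA -(mulmxA B) hF (mulmxA B) mulmxA XBF.
by rewrite !mulmxA.
Qed.

Lemma projective_shrink (P M : rmod) (p : 'M_(rdim P, rdim M)) (E : 'M_(rdim P)) :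
  is_rmod P -> projective P -> is_hom p -> row_full p -> is_hom E -> E *m p = p ->
  exists Q (q : 'M_(rdim Q, rdim M)),
    [/\ is_rmod Q, projective Q, is_hom q, row_full q & (rdim Q <= \rank E)%N].
Proof.
move=> rP pP hp fp hE Ep; have [k rkF] := fitting_rank_pow E; set F := E ^+ k.+1 in rkF.
have hF : is_hom F by exact: hom_exp.
have Fp : F *m p = p by exact: expmx_fix.
have [r [hr Br]] := image_retract hF rkF.
exists (sub_rmod F), (row_base F *m p); split.
- exact/is_rmod_sub/hom_submod.
- exact: projective_retract (hom_sub_rmod (hom_submod hF)) hr Br pP.
- exact: hom_mulmx (hom_sub_rmod (hom_submod hF)) hp.
- rewrite -sub1mx (submx_trans (_ : _ <= p)%MS) ?sub1mx //.
  by rewrite -{1}Fp submxMr // eq_row_base.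
- by rewrite /= /F exprSr -mulmxE mxrankM_maxr.
Qed.

Lemma proj_cover_exists (M : rmod) : is_rmod M -> exists P, is_rmod P /\ proj_cover P M.
Proof.
move=> rM; pose epi d := exists P (p : 'M_(rdim P, rdim M)),
  [/\ is_rmod P, projective P, is_hom p, row_full p & rdim P = d].
have [d [P [p [rP pP hp fp <-]]] mind] : exists2 d, epi d & forall d', epi d' -> (d <= d')%N.
  apply: classic_ex_minn; have [k [F [hF fF]]] := Gen_reg rM.
  exists (rdim (pow_mod (reg_mod L) k)), (pow_mod (reg_mod L) k), F.
  split => //; first exact/is_rmod_pow/is_rmod_reg.
  exact/projective_pow/projective_reg.
exists P; split => //; split => //; exists p; split => // X g rX hg fgp.
have [h [hh hgp]] := pP X M (g *m p) p rX rM (hom_mulmx hg hp) fgp hp.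
have hgp_p : h *m g *m p = p by rewrite -mulmxA.
have [Q [q [rQ pQ hq fq dimQ]]] := projective_shrink rP pP hp fp (hom_mulmx hh hg) hgp_p.
have minQ : (rdim P <= rdim Q)%N by apply: mind; exists Q, q.
by rewrite -col_leq_rank (leq_trans minQ (leq_trans dimQ (mxrankM_maxr _ _))).
Qed.

(** * Atoms of tors L *)

Lemma subcat_trans (T U V : rmod -> Prop) : subcat T U -> subcat U V -> subcat T V.
Proof. by move=> TU UV M rM TM; apply/UV/TU. Qed.

Definition tors_gen (X : rmod) : rmod -> Prop := fun M => forall U, is_tors U -> U X -> U M.

Lemma is_tors_gen (X : rmod) : is_tors (tors_gen X).
Proof.
split.
- by move=> M rM M0 U [zeroU _ _] _; apply: zeroU.
- move=> M N f rM rN TM hf ff U tU UX; case: (tU) => _ quotU _.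
  exact: (quotU M N f) (TM U tU UX) hf ff.
- move=> X' Y Z f g rX rY rZ TX TZ ex U tU UX; case: (tU) => _ _ extU.
  exact: (extU X' Y Z f g) (TX U tU UX) (TZ U tU UX) ex.
Qed.

Lemma tors_gen_self (X : rmod) : tors_gen X X.
Proof. by []. Qed.

Lemma tors_gen_min (X : rmod) (U : rmod -> Prop) : is_tors U -> U X -> subcat (tors_gen X) U.
Proof. by move=> tU UX M _; apply. Qed.

Lemma tors_gen_iso (S S' : rmod) :
  is_rmod S -> is_rmod S' -> iso S S' -> cat_eq (tors_gen S) (tors_gen S').
Proof.
move=> rS rS' iSS'; split; apply: tors_gen_min (is_tors_gen _) _.
- exact (tors_iso (is_tors_gen S') rS' rS (iso_sym iSS') (@tors_gen_self S')).
- exact (tors_iso (is_tors_gen S) rS rS' iSS' (@tors_gen_self S)).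
Qed.

Lemma tors_simple (T : rmod -> Prop) (M : rmod) :
  is_tors T -> is_rmod M -> T M -> (0 < rdim M)%N -> exists2 Q, simple Q & T Q.
Proof.
move=> [_ quotT _] rM TM M_gt0.
have n0 : ~~ row_full (0 : 'M[K]_(rdim M)) by rewrite /row_full mxrank0 eq_sym -lt0n.
have [Q [q [sQ hq fq _]]] := simple_quot rM (fun a => stable0mx _ _) n0.
by exists Q => //; exact: (quotT M Q q rM (simple_rmod sQ) TM hq fq).
Qed.

Lemma nonzero_tors_simple (T : rmod -> Prop) :
  is_tors T -> ~ zero_cat T -> exists2 Q, simple Q & T Q.
Proof.
move=> tT nzT; apply: contrapT => noQ; apply: nzT => M rM TM.
by apply/eqP; rewrite -leqn0 leqNgt; apply/negP => /(tors_simple tT rM TM).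
Qed.

(* [lperp Q] is a torsion class containing every simple module not isomorphic to [Q]. *)
Lemma tors_gen_simple_iso (S Q : rmod) : simple S -> simple Q -> tors_gen S Q -> iso Q S.
Proof.
move=> sS sQ TQ; apply: iso_sym; apply: contrapT => nSQ.
apply: (simple_not_lperp sQ); apply: TQ (is_tors_lperp Q) _.
exact: simple_lperp.
Qed.

Lemma tors_gen_inj (S S' : rmod) :
  simple S -> simple S' -> cat_eq (tors_gen S) (tors_gen S') -> iso S S'.
Proof.
move=> sS sS' [TS _].
exact: tors_gen_simple_iso sS' sS (TS S (simple_rmod sS) (@tors_gen_self S)).
Qed.

Lemma is_atom_tors_gen (S : rmod) : simple S -> is_atom (tors_gen S).
Proof.
move=> sS; have [rS S_gt0 _] := sS; split.
- exact: is_tors_gen.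
- by move=> /(_ S rS (@tors_gen_self S)) S0; rewrite S0 in S_gt0.
move=> T tT TS; have [|nzT] := pselect (zero_cat T); [by left | right].
have [Q sQ TQ] := nonzero_tors_simple tT nzT; have rQ := simple_rmod sQ.
apply: tors_gen_min tT (tors_iso tT rQ rS _ TQ).
exact: tors_gen_simple_iso sS sQ (TS Q rQ TQ).
Qed.

Lemma atom_tors_gen (B : rmod -> Prop) :
  is_atom B -> exists S, [/\ simple S, B S & cat_eq B (tors_gen S)].
Proof.
case=> tB nzB atomB; have [S sS BS] := nonzero_tors_simple tB nzB.
exists S; split => //; have [rS S_gt0 _] := sS.
case: (atomB _ (is_tors_gen S) (tors_gen_min tB BS)) => [/(_ S rS (@tors_gen_self S)) S0|BT].
  by rewrite S0 in S_gt0.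
by split; last exact: tors_gen_min.
Qed.

Local Notation z := (zero_mod L).

Definition simples_in (T : rmod -> Prop) (s : seq rmod) :=
  [/\ forall i, (i < size s)%N -> simple (nth z s i),
      forall i j, (i < size s)%N -> (j < size s)%N -> i <> j ->
        ~ iso (nth z s i) (nth z s j)
    & forall i, (i < size s)%N -> T (nth z s i)].

(* Pairwise non-isomorphic simples generate pairwise distinct torsion classes. *)
Lemma simples_in_size (T : rmod -> Prop) :
  tau_tilting_finite L -> exists n, forall s, simples_in T s -> (size s <= n)%N.
Proof.
case=> n [F torsF]; exists n => s [sim ni _].
have classF (i : 'I_(size s)) : exists j : 'I_n, cat_eq (tors_gen (nth z s i)) (F j).
  by have [j [ltj eqj]] := torsF _ (is_tors_gen (nth z s i)); exists (Ordinal ltj).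
have [f fP] := fin_all_exists classF.
suff /leq_card : injective f by rewrite !card_ord.
move=> i j fij; apply/val_inj/eqP; apply: contraT => /eqP neq_ij.
have [[Fi iF] [Fj jF]] := (fP i, fP j); rewrite fij in Fi iF.
case: (ni i j (ltn_ord i) (ltn_ord j) neq_ij); apply: tors_gen_inj; try exact: sim.
by split; [exact: subcat_trans Fi jF | exact: subcat_trans Fj iF].
Qed.

Lemma simples_in_rcons (T : rmod -> Prop) s M :
  simples_in T s -> simple M -> T M ->
  (forall i, (i < size s)%N -> ~ iso M (nth z s i)) -> simples_in T (rcons s M).
Proof.
move=> [sim ni Ts] sM TM newM; rewrite /simples_in size_rcons.
have nthE i : (i < (size s).+1)%N ->
    (i < size s)%N /\ nth z (rcons s M) i = nth z s i \/ i = size s /\ nth z (rcons s M) i = M.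
  by rewrite ltnS leq_eqVlt nth_rcons => /orP[/eqP->|lti]; [right|left]; rewrite ?ltnn ?eqxx ?lti.
split.
- by move=> i /nthE[[lti ->]|[_ ->]] //; apply: sim.
- move=> i j /nthE[[lti ->]|[-> ->]] /nthE[[ltj ->]|[-> ->]] //; first exact: ni.
  + by move=> _ /iso_sym; apply: newM.
  + by move=> _; apply: newM.
- by move=> i /nthE[[lti ->]|[_ ->]] //; apply: Ts.
Qed.

Lemma simples_transversal (T : rmod -> Prop) : tau_tilting_finite L ->
  exists s, simples_in T s /\ forall M, simple M -> T M ->
    exists i, (i < size s)%N /\ iso M (nth z s i).
Proof.
move=> ttf; have [n bound] := simples_in_size T ttf.
have [k [s [Ts <-]] maxs] : exists2 k, (exists s, simples_in T s /\ size s = k) &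
    forall k', (exists s, simples_in T s /\ size s = k') -> (k' <= k)%N.
  by apply: classic_ex_maxn => [|k [s [Ts <-]]]; [exists 0%N, [::] | exact: bound].
exists s; split => // M sM TM; apply: contrapT => newM.
have /maxs : exists s', simples_in T s' /\ size s' = (size s).+1.
  exists (rcons s M); rewrite size_rcons; split => //; apply: simples_in_rcons => // i lti iM.
  by apply: newM; exists i.
by rewrite ltnn.
Qed.

(** * The three conditions *)

Lemma proj_cover_epi_nth (S : seq rmod) (P : rmod) i :
  proj_cover P (dsum_list S) -> (i < size S)%N ->
  exists q : 'M_(rdim P, rdim (nth z S i)), is_hom q /\ row_full q.
Proof.
move=> [_ [p [hp fp _]]] /dsum_list_epi[pi [hpi fpi]].
by exists (p *m pi); split; [exact: hom_mulmx | exact: row_full_mulmx].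
Qed.

Definition essential (P N : rmod) (p : 'M_(rdim P, rdim N)) :=
  forall X (g : 'M_(rdim X, rdim P)), is_rmod X -> is_hom g -> row_full (g *m p) -> row_full g.

(* If [h] did not vanish on [ker p], its image would be all of [M], so [ker h + ker p = P];
   essentiality of [p] then forces [ker h = P]. *)
Lemma essential_ker_hom (P N M : rmod) (p : 'M_(rdim P, rdim N)) (h : 'M_(rdim P, rdim M)) :
  is_rmod P -> is_hom p -> row_full p -> essential p -> simple M -> is_hom h ->
  kermx p *m h = 0.
Proof.
move=> rP hp fp essp [_ _ minM] hh; apply/eqP; apply: contraT => kh0.
have sKh : submod (kermx p *m h).
  by move=> a; rewrite -mulmxA -hh mulmxA submxMr // ker_submod.
have /submxP[D hD] : (h <= kermx p *m h)%MS.
  case: (minM _ _ sKh) => /andP[Kh0 Kh1]; last exact: submx_trans (submx1 h) Kh1.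
  by rewrite -submx0 Kh0 in kh0.
have hK := ker_submod hh.
have DK : (1%:M - D *m kermx p <= kermx h)%MS.
  by apply/sub_kermxP; rewrite mulmxBl mul1mx -mulmxA -hD subrr.
have p_eq : p = (1%:M - D *m kermx p) *m p.
  by rewrite mulmxBl mul1mx -mulmxA mulmx_ker mulmx0 subr0.
have : row_full (row_base (kermx h) *m p).
  rewrite -sub1mx; apply: submx_trans (_ : p <= _)%MS; first by rewrite sub1mx.
  by rewrite {1}p_eq; apply: submxMr; rewrite eq_row_base.
move/(essp _ _ (is_rmod_sub rP hK) (hom_sub_rmod hK)).
rewrite -sub1mx eq_row_base => /sub_kermxP; rewrite mul1mx => h0.
by rewrite h0 mulmx0 eqxx in kh0.
Qed.

Section ProjectiveCover.
Variables (S : seq rmod) (P : rmod).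
Hypotheses (simS : forall i, (i < size S)%N -> simple (nth z S i))
  (rP : is_rmod P) (coverP : proj_cover P (dsum_list S)).

Lemma simple_cond_Gen_cover : simple_cond S (Gen P).
Proof.
have [pP [p [hp fp essp]]] := coverP.
split; first exact: is_tors_Gen.
  move=> i lti; have [q [hq fq]] := proj_cover_epi_nth coverP lti.
  exact: Gen_epi hq fq.
move=> M sM /(Gen_simpleP _ sM) [h [hh h0]].
have kh := essential_ker_hom rP hp fp essp sM hh.
have hf := hom_factor hp fp hh kh.
have [|i lti [g [hg g0]]] := dsum_list_hom_neq0 hf.
  by apply: contra_neq h0 => f0; rewrite -(mulmxKpV_ker fp kh) f0 mulmx0.
by exists i; split => //; apply/iso_sym/(schur_iso (simS lti) sM hg g0).
Qed.

Lemma Gen_cover_max (U : rmod -> Prop) : simple_cond S U -> subcat U (Gen P).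
Proof.
case: coverP => pP _ [tU _ isoU]; apply: Gen_max => // M sM UM.
have [i [lti /iso_sym [f [hf _ ff]]]] := isoU M sM UM.
have [q [hq fq]] := proj_cover_epi_nth coverP lti.
exists (q *m f); split; first exact: hom_mulmx.
by apply: row_full_neq0; [exact: row_full_mulmx | case: sM].
Qed.

End ProjectiveCover.

Lemma cond3_Gen_cover (S : seq rmod) (T : rmod -> Prop) : cond3 S T ->
  exists P, [/\ is_rmod P, projective P, cat_eq T (Gen P) & proj_cover P (dsum_list S)].
Proof.
move=> [simS _ condT maxT].
have rS : is_rmod (dsum_list S) by apply: is_rmod_dsum_list => i /simS /simple_rmod.
have [P [rP coverP]] := proj_cover_exists rS.
exists P; split => //; first by case: coverP.
split; first exact: Gen_cover_max condT.
exact/maxT/simple_cond_Gen_cover.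
Qed.

Lemma Gen_cond3 (T : rmod -> Prop) (P : rmod) : tau_tilting_finite L -> is_tors T ->
  projective P -> cat_eq T (Gen P) -> exists S, cond3 S T.
Proof.
move=> ttf tT pP [TP PT]; have [S [[simS niS TS] isoS]] := simples_transversal T ttf.
exists S; split => // U [tU US isoU]; apply: subcat_trans PT.
apply: Gen_max => // M sM UM; apply/(Gen_simpleP _ sM).
have [j [ltj iM]] := isoU M sM UM; have rM := simple_rmod sM; have rj := simple_rmod (simS j ltj).
exact: tors_iso (is_tors_Gen pP) rj rM (iso_sym iM) (TP _ rj (TS j ltj)).
Qed.

Lemma cond3_cond2 (S : seq rmod) (T : rmod -> Prop) : cond3 S T -> cond2 (map tors_gen S) T.
Proof.
move=> [simS _ [tT TS isoT] maxT].
have nthA i : (i < size S)%N -> nth (@nullc K L) (map tors_gen S) i = tors_gen (nth z S i).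
  by move=> lti; rewrite (nth_map z).
have condT : atom_cond (map tors_gen S) T.
  split => // [i|B atomB BT].
    by rewrite size_map => lti; rewrite nthA //; apply: tors_gen_min (TS i lti).
  have [Q [sQ BQ [BQ' QB]]] := atom_tors_gen atomB; have rQ := simple_rmod sQ.
  have [i [lti iQ]] := isoT Q sQ (BT Q rQ BQ).
  have [Qi iQ'] := tors_gen_iso rQ (simple_rmod (simS i lti)) iQ.
  exists i; rewrite size_map nthA //; split => //.
  by split; [exact: subcat_trans BQ' Qi | exact: subcat_trans iQ' QB].
split => // [i|U [tU AU atomU]].
  by rewrite size_map => lti; rewrite nthA //; apply: is_atom_tors_gen (simS i lti).
apply: maxT; split => // [i lti|M sM UM].
  have := AU i; rewrite size_map nthA // => /(_ lti); apply; first exact: simple_rmod (simS i lti).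
  exact: tors_gen_self.
have rM := simple_rmod sM.
have [i []] := atomU _ (is_atom_tors_gen sM) (tors_gen_min tU UM).
rewrite size_map => lti; rewrite nthA // => eqMi.
by exists i; split => //; apply: tors_gen_inj sM (simS i lti) eqMi.
Qed.

Lemma cond2_cond3 (A : seq (rmod -> Prop)) (T : rmod -> Prop) :
  tau_tilting_finite L -> cond2 A T -> exists S, cond3 S T.
Proof.
move=> ttf [atomA [tT AT atomT] maxT].
have [S [[simS niS TS] isoS]] := simples_transversal T ttf.
exists S; split => // U [tU US isoU]; apply: maxT; split => // [i lti|B atomB BU].
  have [Q [sQ BQ [BQ' _]]] := atom_tors_gen (atomA i lti); have rQ := simple_rmod sQ.
  have [j [ltj iQ]] := isoS Q sQ (AT i lti Q rQ BQ); have rj := simple_rmod (simS j ltj).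
  exact: subcat_trans BQ' (tors_gen_min tU (tors_iso tU rj rQ (iso_sym iQ) (US j ltj))).
have [Q [sQ BQ [BQ' _]]] := atom_tors_gen atomB; have rQ := simple_rmod sQ.
have [j [ltj iQ]] := isoU Q sQ (BU Q rQ BQ); have rj := simple_rmod (simS j ltj).
apply: atomT => //; apply: subcat_trans BQ' (tors_gen_min tT _).
exact: tors_iso tT rj rQ (iso_sym iQ) (TS j ltj).
Qed.

Lemma Gen_dim0 (P : rmod) : rdim P = 0%N -> zero_cat (Gen P).
Proof.
move=> P0 M _ [k [F [_ fF]]]; apply/eqP; rewrite -leqn0 -(eqP fF).
apply: leq_trans (rank_leq_row F) _.
by elim: k {F fF} => //= k; rewrite P0.
Qed.

Lemma cond2_zero (A : seq (rmod -> Prop)) (T : rmod -> Prop) :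
  cond2 A T -> zero_cat T -> size A = 0%N.
Proof.
case: A => // B A [atomA [_ AT _] _] T0; have [_ nzB _] := atomA 0%N isT.
by case: nzB => M rM BM; apply: T0 rM (AT 0%N isT M rM BM).
Qed.

Lemma cond3_zero (S : seq rmod) (T : rmod -> Prop) : cond3 S T -> zero_cat T -> size S = 0%N.
Proof.
case: S => // X S [simS _ [_ TS _] _] T0; have [rX X_gt0 _] := simS 0%N isT.
by rewrite (T0 X rX (TS 0%N isT)) in X_gt0.
Qed.

Lemma cond3_nil (S : seq rmod) (T : rmod -> Prop) : cond3 S T -> size S = 0%N -> zero_cat T.
Proof.
move=> [_ _ [tT _ isoT] _] S0 M rM TM; apply/eqP; rewrite -leqn0 leqNgt; apply/negP.
by case/(tors_simple tT rM TM) => Q sQ /(isoT Q sQ) [i []]; rewrite S0.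
Qed.
End RightModules.

Theorem proposition5p9 (K : fieldType) (L : falgType K) :
  basic_alg L -> tau_tilting_finite L ->
  forall T : rmod L -> Prop, is_tors T ->
  [/\ (exists P : rmod L, [/\ is_rmod P, projective P & cat_eq T (Gen P)])
        <-> (exists A, cond2 A T),
      (exists A, cond2 A T) <-> (exists S, cond3 S T),
      (forall S, cond3 S T ->
         exists P : rmod L, [/\ is_rmod P, cat_eq T (Gen P)
                              & proj_cover P (dsum_list S)])
    & (forall (P : rmod L) A S, is_rmod P -> projective P -> cat_eq T (Gen P) ->
         cond2 A T -> cond3 S T ->
         (rdim P = 0%N <-> (size A = 0%N /\ size S = 0%N)))].
Proof.
move=> _ ttf T tT.
have cond23 : (exists A, cond2 A T) <-> (exists S, cond3 S T).
  split=> [[A] | [S]]; [exact: cond2_cond3 | exists (map (@tors_gen K L) S); exact: cond3_cond2].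
split=> //.
- split=> [[P [_ pP TP]] | /cond23 [S /cond3_Gen_cover [P [rP pP TP _]]]]; last by exists P.
  exact/cond23/(Gen_cond3 ttf tT pP TP).
- by move=> S /cond3_Gen_cover [P [rP _ TP coverP]]; exists P.
move=> P A S rP pP [TP PT] condA condS; split=> [P0 | [_ S0]].
  have T0 : zero_cat T by move=> M rM /(TP M rM); apply: Gen_dim0 P0 M rM.
  by split; [exact: cond2_zero condA T0 | exact: cond3_zero condS T0].
exact: cond3_nil condS S0 P rP (PT P rP (Gen_self P)).
Qed.
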